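(* Let $\gamma\ge 2$ be an integer, $\delta>0$, and let $\mu$ range over an arbitrary parameter set. Let $F(\rho,\mu)$ be complex valued with $F(\cdot,\mu)\in C^{\gamma+1}([0,\delta))$ for each $\mu$, and set $a_j(\mu)=\partial_\rho^jF(0,\mu)/j!$. Assume (F1) $a_0(\mu)=a_1(\mu)=0$ for all $\mu$; (F2) there is $C>0$ with $\sum_{j=2}^{\gamma}|a_j(\mu)|\ge C$ for all $\mu$; (F3) for each $\mu$, $|\partial_\rho F(\rho,\mu)|$ is increasing in $\rho$ for $0<\rho<\delta$; (F4) for each $k\le\gamma+1$, $\partial_\rho^kF(\rho,\mu)$ is bounded uniformly in $0<\rho<\delta$ and $\mu$. Then, provided $\delta$ is sufficiently small (depending only on $\gamma$ and the constants in (F2), (F4)), there exist constants $C>0$ and $C_m>0$ such that for all $0<\rho<\delta$, all $\mu$, and all integers $1\le m\le\gamma+1$, $$|\partial_\rho F(\rho,\mu)|\ge C\rho^{\gamma-1}\qquad\text{and}\qquad |\partial_\rho^mF(\rho,\mu)|\le C_m\rho^{1-m}|\partial_\rho F(\rho,\mu)|.$$ *)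

From Stdlib Require Import Reals Arith.
Open Scope R_scope.

(* A complex number is represented by its real and imaginary parts;
   its modulus is sqrt (re^2 + im^2). *)
Definition cmod (re im : R) : R := sqrt (re * re + im * im).

Definition has_rderiv (f : R -> R) (x l : R) : Prop :=
  forall eps : R, 0 < eps -> exists d : R, 0 < d /\
    forall h : R, 0 < h < d -> Rabs ((f (x + h) - f x) / h - l) < eps.

Definition cont_on_0d (f : R -> R) (delta : R) : Prop :=
  forall x : R, 0 <= x < delta -> forall eps : R, 0 < eps ->
    exists d : R, 0 < d /\ forall y : R, 0 <= y < delta -> Rabs (y - x) < d ->
      Rabs (f y - f x) < eps.

(* D : nat -> R -> R is the list of derivatives of the real function D 0,
   which is C^n on [0, delta): for k < n, D (k+1) is the derivative of D k
   on (0, delta) and the right derivative at 0; D n is continuous on [0, delta). *)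
Definition Cn_on_0d (n : nat) (delta : R) (D : nat -> R -> R) : Prop :=
  (forall k : nat, (k < n)%nat ->
     (forall x : R, 0 < x < delta -> derivable_pt_lim (D k) x (D (S k) x)) /\
     has_rderiv (D k) 0 (D (S k) 0)) /\
  cont_on_0d (D n) delta.

(* Fix mu, write Dr, Di for the chains of rho-derivatives of Re F, Im F,
   let g = gamma and A = |F'(rho)|.
   1. Taylor's formula with remainder bound (lemma [taylor]), proved by
      iterating a mean value estimate, gives for 0 < s <= rho
        |Re F'(s) - sum_{i<g} c_i s^i| <= (Bp / g!) rho^g,  c_i = coef Dr 1 i,
      and similarly for Im F'.  By (F3), |F'(s)| <= A on (0, rho].
   2. Hence the polynomial t |-> sum c_i rho^i t^i is bounded by A + O(rho^g)
      on (0, 1]; by equivalence of norms on polynomials of degree < g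
      ([poly_coef_bound]) its coefficients satisfy
        sum_i |c_i| rho^i <= Kpoly(g) (A + (Bp / g!) rho^g).
   3. By (F2) the left side (real + imaginary) is >= C0 rho^(g-1); for
      rho < delta0 the remainder is absorbed, giving A >= Clow rho^(g-1).
   4. Taylor's formula for F^(m) of order g+1-m expresses F^(m)(rho) through
      the same coefficients c_i (shifted and rescaled) plus a remainder
      O(rho^g) = O(A); this gives |F^(m)(rho)| <= Cder rho^(1-m) A. *)

From Stdlib Require Import Reals Arith Lra Lia.
Open Scope R_scope.

(* The modulus dominates both parts and is dominated by their sum; this lets
   every estimate be proved separately for the real and imaginary parts. *)
Lemma cmod_re (a b : R) : Rabs a <= cmod a b.
Proof. unfold cmod; rewrite <- sqrt_Rsqr_abs; apply sqrt_le_1_alt; unfold Rsqr; nra. Qed.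

Lemma cmod_im (a b : R) : Rabs b <= cmod a b.
Proof. unfold cmod; rewrite <- sqrt_Rsqr_abs; apply sqrt_le_1_alt; unfold Rsqr; nra. Qed.

Lemma cmod_le_sum (a b : R) : cmod a b <= Rabs a + Rabs b.
Proof.
  pose proof (Rabs_pos a); pose proof (Rabs_pos b).
  unfold cmod; rewrite <- (sqrt_Rsqr (Rabs a + Rabs b)) by lra.
  apply sqrt_le_1_alt.
  replace (a * a + b * b) with (a² + b²) by reflexivity.
  rewrite (Rsqr_abs a), (Rsqr_abs b); unfold Rsqr; nra.
Qed.

Lemma cmod_nonneg (a b : R) : 0 <= cmod a b.
Proof. apply sqrt_pos. Qed.

Lemma pow_le_one (x : R) (n : nat) : 0 <= x <= 1 -> x ^ n <= 1.
Proof.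
  intros Hx; induction n as [|n IH]; simpl; [lra|].
  assert (0 <= x ^ n) by (apply pow_le; lra); nra.
Qed.

Lemma pow_decr (x : R) (i j : nat) : 0 <= x <= 1 -> (i <= j)%nat -> x ^ j <= x ^ i.
Proof.
  intros Hx Hij; replace j with (i + (j - i))%nat by lia; rewrite pow_add.
  assert (0 <= x ^ i) by (apply pow_le; lra).
  assert (x ^ (j - i) <= 1) by (apply pow_le_one; lra); nra.
Qed.

Lemma inv_fact_le_one (n : nat) : / INR (fact n) <= 1.
Proof.
  assert (1 <= INR (fact n)).
  { change 1 with (INR 1); apply le_INR; pose proof (lt_O_fact n); lia. }
  rewrite <- Rinv_1; apply Rinv_le_contravar; lra.
Qed.

Fixpoint sumN (w : nat -> R) (n : nat) : R :=
  match n with O => 0 | S n' => sumN w n' + w n' end.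

Lemma sumN_le (w1 w2 : nat -> R) (n : nat) :
  (forall i, (i < n)%nat -> w1 i <= w2 i) -> sumN w1 n <= sumN w2 n.
Proof.
  induction n as [|n IH]; simpl; intros H; [lra|].
  assert (w1 n <= w2 n) by (apply H; lia).
  assert (sumN w1 n <= sumN w2 n) by (apply IH; intros; apply H; lia); lra.
Qed.

Lemma sumN_abs (w : nat -> R) (n : nat) : Rabs (sumN w n) <= sumN (fun i => Rabs (w i)) n.
Proof.
  induction n as [|n IH]; simpl; [rewrite Rabs_R0; lra|].
  eapply Rle_trans; [apply Rabs_triang | lra].
Qed.

Lemma sumN_plus (w1 w2 : nat -> R) (n : nat) :
  sumN (fun i => w1 i + w2 i) n = sumN w1 n + sumN w2 n.
Proof. induction n; simpl; lra. Qed.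

Lemma sumN_scal (a : R) (w : nat -> R) (n : nat) : sumN (fun i => a * w i) n = a * sumN w n.
Proof. induction n as [|n IH]; simpl; [ring | rewrite IH; ring]. Qed.

Lemma sumN_nonneg (w : nat -> R) (n : nat) :
  (forall i, (i < n)%nat -> 0 <= w i) -> 0 <= sumN w n.
Proof.
  induction n as [|n IH]; simpl; intros H; [lra|].
  assert (0 <= w n) by (apply H; lia).
  assert (0 <= sumN w n) by (apply IH; intros; apply H; lia); lra.
Qed.

Lemma sumN_const_bound (w : nat -> R) (n : nat) (X : R) :
  (forall i, (i < n)%nat -> w i <= X) -> sumN w n <= INR n * X.
Proof.
  induction n as [|n IH]; intros H; simpl sumN; [simpl; lra|].
  assert (w n <= X) by (apply H; lia).
  assert (sumN w n <= INR n * X) by (apply IH; intros; apply H; lia).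
  rewrite S_INR; lra.
Qed.

Lemma sumN_term (w : nat -> R) (n i : nat) :
  (forall j, (j < n)%nat -> 0 <= w j) -> (i < n)%nat -> w i <= sumN w n.
Proof.
  induction n as [|n IH]; simpl; intros H Hi; [lia|].
  assert (0 <= w n) by (apply H; lia).
  destruct (Nat.eq_dec i n) as [->|Hne].
  - assert (0 <= sumN w n) by (apply sumN_nonneg; intros; apply H; lia); lra.
  - assert (w i <= sumN w n) by (apply IH; [intros; apply H; lia | lia]); lra.
Qed.
(** * Polynomials of degree < n on (0, 1] *)

Definition poly (c : nat -> R) (n : nat) (t : R) : R := sumN (fun i => c i * t ^ i) n.

Lemma poly_scale (c : nat -> R) (n : nat) (r t : R) :
  poly c n (r * t) = poly (fun i => c i * r ^ i) n t.
Proof.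
  unfold poly; induction n as [|n IH]; simpl sumN; [ring|].
  rewrite IH, Rpow_mult_distr; ring.
Qed.

Lemma poly_abs (c : nat -> R) (n : nat) (t : R) :
  Rabs (poly c n t) <= sumN (fun i => Rabs (c i) * Rabs t ^ i) n.
Proof.
  eapply Rle_trans; [apply sumN_abs|].
  apply sumN_le; intros i _; rewrite Rabs_mult, RPow_abs; lra.
Qed.

(* p(t) - 2^k p(t/2) is again a polynomial; when p has degree k its top
   coefficient vanishes. *)
Lemma poly_half_diff (c : nat -> R) (k n : nat) (t : R) :
  poly c n t - 2 ^ k * poly c n (t / 2) = poly (fun i => c i * (1 - 2 ^ k / 2 ^ i)) n t.
Proof.
  unfold poly; induction n as [|n IH]; simpl sumN; [ring|].
  rewrite <- IH; unfold Rdiv; rewrite Rpow_mult_distr, pow_inv.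
  assert (2 ^ n <> 0) by (apply pow_nonzero; lra); field; auto.
Qed.

(* Constants of the equivalence between the sup norm on (0, 1] and the
   l^1 norm of the coefficients of polynomials of degree < n. *)
Fixpoint Kpoly (n : nat) : R :=
  match n with O => 0 | S n' => 1 + 2 * Kpoly n' * (1 + 2 ^ n') end.

Lemma Kpoly_nonneg (n : nat) : 0 <= Kpoly n.
Proof.
  induction n; simpl; [lra|].
  assert (0 < 2 ^ n) by (apply pow_lt; lra); nra.
Qed.

Lemma Kpoly_ge1 (n : nat) : (1 <= n)%nat -> 1 <= Kpoly n.
Proof.
  destruct n as [|n]; [lia|]; intros _; simpl.
  pose proof (Kpoly_nonneg n); assert (0 < 2 ^ n) by (apply pow_lt; lra); nra.
Qed.

Section PolyBound.

Variables (c : nat -> R) (n : nat) (M : R).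
Hypothesis Hsup : forall t, 0 < t <= 1 -> Rabs (poly c (S n) t) <= M.

(* Eliminating the top coefficient at the cost of a factor 1 + 2^n. *)
Lemma poly_kill_top (t : R) : 0 < t <= 1 ->
  Rabs (poly (fun i => c i * (1 - 2 ^ n / 2 ^ i)) n t) <= M * (1 + 2 ^ n).
Proof.
  intros Ht.
  assert (Etop : poly (fun i => c i * (1 - 2 ^ n / 2 ^ i)) n t
               = poly (fun i => c i * (1 - 2 ^ n / 2 ^ i)) (S n) t).
  { unfold poly; simpl sumN.
    assert (2 ^ n <> 0) by (apply pow_nonzero; lra).
    replace (2 ^ n / 2 ^ n) with 1 by (field; auto); ring. }
  rewrite Etop, <- poly_half_diff.
  eapply Rle_trans; [apply Rabs_triang|].
  rewrite Rabs_Ropp, Rabs_mult, (Rabs_pos_eq (2 ^ n)) by (apply pow_le; lra).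
  assert (Rabs (poly c (S n) t) <= M) by (apply Hsup; lra).
  assert (Rabs (poly c (S n) (t / 2)) <= M) by (apply Hsup; lra).
  assert (0 < 2 ^ n) by (apply pow_lt; lra); nra.
Qed.

(* The elimination does not shrink the lower coefficients: 2^n / 2^i >= 2. *)
Lemma poly_kill_top_coef (i : nat) : (i < n)%nat ->
  Rabs (c i) <= Rabs (c i * (1 - 2 ^ n / 2 ^ i)).
Proof.
  intros Hi; rewrite Rabs_mult.
  assert (0 < 2 ^ i) by (apply pow_lt; lra).
  assert (2 * 2 ^ i <= 2 ^ n) by (change (2 * 2 ^ i) with (2 ^ S i); apply Rle_pow; [lra | lia]).
  assert (2 <= 2 ^ n / 2 ^ i).
  { apply (Rmult_le_reg_r (2 ^ i)); auto.
    unfold Rdiv; rewrite Rmult_assoc, Rinv_l by lra; lra. }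
  rewrite (Rabs_left1 (1 - _)) by lra; pose proof (Rabs_pos (c i)); nra.
Qed.

(* The top coefficient is p(1) minus the lower part. *)
Lemma poly_top_coef : Rabs (c n) <= M + sumN (fun i => Rabs (c i)) n.
Proof.
  replace (c n) with (poly c (S n) 1 - poly c n 1) by (unfold poly; simpl sumN; rewrite pow1; ring).
  eapply Rle_trans; [apply Rabs_triang|]; rewrite Rabs_Ropp.
  assert (Rabs (poly c (S n) 1) <= M) by (apply Hsup; lra).
  assert (Rabs (poly c n 1) <= sumN (fun i => Rabs (c i)) n).
  { eapply Rle_trans; [apply poly_abs|].
    apply sumN_le; intros i _; rewrite Rabs_R1, pow1; lra. }
  lra.
Qed.

End PolyBound.

Lemma poly_coef_bound (n : nat) : forall (c : nat -> R) (M : R),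
  (forall t, 0 < t <= 1 -> Rabs (poly c n t) <= M) ->
  sumN (fun i => Rabs (c i)) n <= Kpoly n * M.
Proof.
  induction n as [|n IH]; intros c M Hsup;
    (assert (HM : 0 <= M) by (eapply Rle_trans; [apply Rabs_pos | apply (Hsup 1); lra])).
  - simpl; lra.
  - assert (Hlow := IH _ _ (poly_kill_top c n M Hsup)).
    assert (sumN (fun i => Rabs (c i)) n
            <= sumN (fun i => Rabs (c i * (1 - 2 ^ n / 2 ^ i))) n)
      by (apply sumN_le; apply poly_kill_top_coef).
    pose proof (poly_top_coef c n M Hsup).
    simpl sumN; simpl Kpoly; pose proof (Kpoly_nonneg n).
    assert (0 < 2 ^ n) by (apply pow_lt; lra); nra.
Qed.

(** * Right continuity at 0, derivatives of polynomials, Taylor's formula *)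

Definition right_cont0 (h : R -> R) : Prop :=
  forall eps, 0 < eps -> exists d, 0 < d /\ forall y, 0 < y < d -> Rabs (h y - h 0) < eps.

Lemma rderiv_right_cont0 (f : R -> R) (l : R) : has_rderiv f 0 l -> right_cont0 f.
Proof.
  intros H eps Heps; destruct (H 1 ltac:(lra)) as [d [Hd Hh]].
  assert (Hl : 0 < Rabs l + 1) by (pose proof (Rabs_pos l); lra).
  exists (Rmin d (eps / (Rabs l + 1))); split.
  { apply Rmin_pos; auto; apply Rdiv_lt_0_compat; auto. }
  intros y Hy.
  assert (y < d) by (eapply Rlt_le_trans; [apply Hy | apply Rmin_l]).
  assert (Hy2 : y < eps / (Rabs l + 1)) by (eapply Rlt_le_trans; [apply Hy | apply Rmin_r]).
  specialize (Hh y ltac:(lra)); rewrite Rplus_0_l in Hh.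
  replace (f y - f 0) with (y * ((f y - f 0) / y - l) + y * l) by (field; lra).
  eapply Rle_lt_trans; [apply Rabs_triang|].
  rewrite !Rabs_mult, Rabs_pos_eq by lra.
  assert (y * (Rabs l + 1) < eps).
  { apply (Rmult_lt_compat_r (Rabs l + 1)) in Hy2; auto.
    unfold Rdiv in Hy2; rewrite Rmult_assoc, Rinv_l in Hy2 by lra; lra. }
  assert (y * Rabs ((f y - f 0) / y - l) < y * 1) by (apply Rmult_lt_compat_l; lra).
  lra.
Qed.

Lemma deriv_right_cont0 (f : R -> R) (l : R) : derivable_pt_lim f 0 l -> right_cont0 f.
Proof.
  intros H eps Heps.
  assert (Hc : continuity_pt f 0) by (apply derivable_continuous_pt; exists l; exact H).
  destruct (Hc eps Heps) as [a [Ha Hh]]; exists a; split; auto.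
  intros y Hy; apply Hh; split; [split; [exact I | lra]|].
  simpl; unfold R_dist; rewrite Rminus_0_r, Rabs_pos_eq; lra.
Qed.

Lemma right_cont0_minus (f g : R -> R) :
  right_cont0 f -> right_cont0 g -> right_cont0 (fun x => f x - g x).
Proof.
  intros Hf Hg eps Heps.
  destruct (Hf (eps / 2) ltac:(lra)) as [d1 [Hd1 H1]].
  destruct (Hg (eps / 2) ltac:(lra)) as [d2 [Hd2 H2]].
  exists (Rmin d1 d2); split; [apply Rmin_pos; auto|]; intros y Hy.
  assert (y < d1) by (eapply Rlt_le_trans; [apply Hy | apply Rmin_l]).
  assert (y < d2) by (eapply Rlt_le_trans; [apply Hy | apply Rmin_r]).
  specialize (H1 y ltac:(lra)); specialize (H2 y ltac:(lra)).
  replace (f y - g y - (f 0 - g 0)) with ((f y - f 0) - (g y - g 0)) by ring.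
  eapply Rle_lt_trans; [apply Rabs_triang|]; rewrite Rabs_Ropp; lra.
Qed.

Lemma poly_derivative (c : nat -> R) (n : nat) (x : R) :
  derivable_pt_lim (poly c n) x (sumN (fun i => c i * (INR i * x ^ pred i)) n).
Proof.
  induction n as [|n IH].
  - change (derivable_pt_lim (fct_cte 0) x 0); apply derivable_pt_lim_const.
  - apply (derivable_pt_lim_plus (poly c n) (mult_real_fct (c n) (fun t => t ^ n))); auto.
    apply derivable_pt_lim_scal, derivable_pt_lim_pow.
Qed.

Definition coef (D : nat -> R -> R) (m i : nat) : R := D (m + i)%nat 0 / INR (fact i).

Lemma taylor_poly_derivative (D : nat -> R -> R) (m n : nat) (x : R) :
  derivable_pt_lim (poly (coef D m) (S n)) x (poly (coef D (S m)) n x).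
Proof.
  replace (poly (coef D (S m)) n x)
    with (sumN (fun i => coef D m i * (INR i * x ^ pred i)) (S n)).
  { apply poly_derivative. }
  unfold poly; induction n as [|n IH]; [simpl; ring|].
  change (sumN (fun i => coef D m i * (INR i * x ^ pred i)) (S n)
          + coef D m (S n) * (INR (S n) * x ^ n)
          = sumN (fun i => coef D (S m) i * x ^ i) n + coef D (S m) n * x ^ n).
  rewrite IH; unfold coef; rewrite Nat.add_succ_r, <- Nat.add_succ_l.
  replace (fact (S n)) with (S n * fact n)%nat by reflexivity; rewrite mult_INR.
  assert (INR (fact n) <> 0) by apply INR_fact_neq_0.
  assert (INR (S n) <> 0) by (apply not_0_INR; lia).
  field; auto.
Qed.

Lemma poly_at0 (c : nat -> R) (n : nat) : poly c (S n) 0 = c 0%nat.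
Proof.
  unfold poly; induction n as [|n IH]; [simpl; ring|].
  change (sumN (fun i => c i * 0 ^ i) (S n) + c (S n) * 0 ^ S n = c 0%nat).
  rewrite IH; simpl; ring.
Qed.

(* The mean value theorem is applied on [e, rho] with e -> 0. *)
Lemma growth_bound (h h' : R -> R) (delta c : R) (n : nat) :
  0 <= c ->
  (forall x, 0 < x < delta -> derivable_pt_lim h x (h' x)) ->
  (forall x, 0 < x < delta -> Rabs (h' x) <= c * INR (S n) * x ^ n) ->
  right_cont0 h -> h 0 = 0 ->
  forall rho, 0 < rho < delta -> Rabs (h rho) <= c * rho ^ S n.
Proof.
  intros Hc Hd Hb Hr H0 rho Hrho; apply Rle_plus_epsilon; intros eta Heta.
  destruct (Hr eta Heta) as [d [Hdp Hh]].
  set (e := Rmin (d / 2) (rho / 2)).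
  assert (He1 : 0 < e) by (apply Rmin_pos; lra).
  assert (He2 : e <= d / 2) by apply Rmin_l.
  assert (He3 : e <= rho / 2) by apply Rmin_r.
  specialize (Hh e ltac:(lra)); rewrite H0, Rminus_0_r in Hh.
  assert (0 <= c * e ^ S n) by (apply Rmult_le_pos; [lra | apply pow_le; lra]).
  destruct (MVT_cor2 (fun x => h x - c * x ^ S n) (fun x => h' x - c * (INR (S n) * x ^ n)) e rho)
    as [z [Hz1 Hz2]]; [lra| |].
  { intros x Hx; apply (derivable_pt_lim_minus h (mult_real_fct c (fun y => y ^ S n))).
    - apply Hd; lra.
    - apply derivable_pt_lim_scal, derivable_pt_lim_pow. }
  destruct (MVT_cor2 (fun x => h x + c * x ^ S n) (fun x => h' x + c * (INR (S n) * x ^ n)) e rho)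
    as [w [Hw1 Hw2]]; [lra| |].
  { intros x Hx; apply (derivable_pt_lim_plus h (mult_real_fct c (fun y => y ^ S n))).
    - apply Hd; lra.
    - apply derivable_pt_lim_scal, derivable_pt_lim_pow. }
  assert (Hz : h' z <= c * INR (S n) * z ^ n)
    by (eapply Rle_trans; [apply Rle_abs | apply Hb; lra]).
  assert (Hw : - h' w <= c * INR (S n) * w ^ n)
    by (eapply Rle_trans; [apply Rle_abs | rewrite Rabs_Ropp; apply Hb; lra]).
  assert ((h' z - c * (INR (S n) * z ^ n)) * (rho - e) <= 0) by nra.
  assert ((h' w + c * (INR (S n) * w ^ n)) * (rho - e) >= 0) by nra.
  apply Rabs_def2 in Hh; apply Rabs_le; lra.
Qed.

Definition deriv_chain (D : nat -> R -> R) (delta Bp : R) (N : nat) : Prop :=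
  (forall k, (k < N)%nat ->
     (forall x, 0 < x < delta -> derivable_pt_lim (D k) x (D (S k) x)) /\ right_cont0 (D k)) /\
  (forall x, 0 < x < delta -> Rabs (D N x) <= Bp).

Lemma taylor (D : nat -> R -> R) (delta Bp : R) (N : nat) :
  0 <= Bp -> deriv_chain D delta Bp N ->
  forall n m, (m + n = N)%nat -> forall rho, 0 < rho < delta ->
  Rabs (D m rho - poly (coef D m) n rho) <= Bp * rho ^ n / INR (fact n).
Proof.
  intros HB [HD HN] n; induction n as [|n IH]; intros m Hmn rho Hr.
  - replace m with N by lia; unfold poly; simpl; rewrite Rminus_0_r.
    replace (Bp * 1 / 1) with Bp by field; apply HN; auto.
  - destruct (HD m ltac:(lia)) as [Hdm Hrm].
    assert (Hf : 0 < INR (fact (S n))) by apply INR_fact_lt_0.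
    replace (Bp * rho ^ S n / INR (fact (S n))) with (Bp / INR (fact (S n)) * rho ^ S n)
      by (field; lra).
    apply (growth_bound (fun x => D m x - poly (coef D m) (S n) x)
             (fun x => D (S m) x - poly (coef D (S m)) n x) delta); auto.
    + apply Rmult_le_pos; auto; left; apply Rinv_0_lt_compat; auto.
    + intros x Hx; apply (derivable_pt_lim_minus (D m) (poly (coef D m) (S n))).
      * apply Hdm; auto.
      * apply taylor_poly_derivative.
    + intros x Hx; eapply Rle_trans; [apply (IH (S m)); auto; lia|].
      right; replace (fact (S n)) with (S n * fact n)%nat by reflexivity; rewrite mult_INR.
      assert (INR (fact n) <> 0) by apply INR_fact_neq_0.
      assert (INR (S n) <> 0) by (apply not_0_INR; lia).
      field; auto.
    + apply right_cont0_minus; auto.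
      apply (deriv_right_cont0 _ (poly (coef D (S m)) n 0)), taylor_poly_derivative.
    + rewrite poly_at0; unfold coef; rewrite Nat.add_0_r; simpl; field.
Qed.

(* If |D 1| <= A on (0, rho], the rescaled Taylor polynomial of D 1 of degree
   < g is bounded on (0, 1] by A plus the remainder, so its coefficients are
   controlled by norm equivalence. *)
Lemma chain_coef_bound (D : nat -> R -> R) (delta Bp : R) (g : nat) (rho A : R) :
  0 <= Bp -> deriv_chain D delta Bp (S g) -> 0 < rho < delta ->
  (forall s, 0 < s <= rho -> Rabs (D 1%nat s) <= A) ->
  sumN (fun i => Rabs (coef D 1 i) * rho ^ i) g
    <= Kpoly g * (A + Bp / INR (fact g) * rho ^ g).
Proof.
  intros HB HD Hr HA.
  eapply Rle_trans.
  { apply (sumN_le _ (fun i => Rabs (coef D 1 i * rho ^ i))); intros i _.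
    rewrite Rabs_mult, (Rabs_pos_eq (rho ^ i)) by (apply pow_le; lra); lra. }
  apply poly_coef_bound; intros t Ht; rewrite <- poly_scale.
  assert (Hs : 0 < rho * t <= rho) by (split; nra).
  assert (T := taylor D delta Bp (S g) HB HD g 1 ltac:(lia) (rho * t) ltac:(lra)).
  assert (Hf : 0 < INR (fact g)) by apply INR_fact_lt_0.
  assert (Bp * (rho * t) ^ g / INR (fact g) <= Bp / INR (fact g) * rho ^ g).
  { assert ((rho * t) ^ g <= rho ^ g) by (apply pow_incr; lra).
    unfold Rdiv; rewrite Rmult_comm, <- Rmult_assoc, (Rmult_comm (/ _)).
    apply Rmult_le_compat_l; [|lra].
    apply Rmult_le_pos; auto; left; apply Rinv_0_lt_compat; auto. }
  specialize (HA _ Hs).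
  replace (poly (coef D 1) g (rho * t))
    with (D 1%nat (rho * t) - (D 1%nat (rho * t) - poly (coef D 1) g (rho * t))) by ring.
  eapply Rle_trans; [apply Rabs_triang|]; rewrite Rabs_Ropp; lra.
Qed.

(* The Taylor coefficients of D (p+1) are those of D 1, shifted by p and
   rescaled by factorials; hence bounds on |coef D 1 j| rho^j transfer. *)
Lemma shifted_coef_bound (D : nat -> R -> R) (g p i : nat) (rho X : R) :
  0 <= rho -> (forall j, (j < g)%nat -> Rabs (coef D 1 j) * rho ^ j <= X) ->
  (p + i < g)%nat ->
  Rabs (coef D (S p) i) * rho ^ (p + i) <= INR (fact g) * X.
Proof.
  intros Hr HX Hpi.
  set (j := (p + i)%nat).
  assert (E : coef D (S p) i = coef D 1 j * INR (fact j) * / INR (fact i)).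
  { unfold coef, j; replace (S p + i)%nat with (1 + (p + i))%nat by lia.
    pose proof (INR_fact_neq_0 i); pose proof (INR_fact_neq_0 (p + i)); field; auto. }
  assert (Hfi := inv_fact_le_one i).
  assert (0 < / INR (fact i)) by (apply Rinv_0_lt_compat, INR_fact_lt_0).
  assert (0 < INR (fact j)) by apply INR_fact_lt_0.
  assert (INR (fact j) <= INR (fact g)) by (apply le_INR, Factorial.fact_le; unfold j; lia).
  assert (Hj := HX j Hpi).
  assert (0 <= Rabs (coef D 1 j) * rho ^ j)
    by (apply Rmult_le_pos; [apply Rabs_pos | apply pow_le; lra]).
  rewrite E, !Rabs_mult, (Rabs_pos_eq (INR _)), (Rabs_pos_eq (/ _)) by lra.
  replace (Rabs (coef D 1 j) * INR (fact j) * / INR (fact i) * rho ^ j)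
    with ((Rabs (coef D 1 j) * rho ^ j) * (INR (fact j) * / INR (fact i))) by ring.
  assert (INR (fact j) * / INR (fact i) <= INR (fact g)) by nra.
  assert (0 <= INR (fact j) * / INR (fact i)) by nra.
  nra.
Qed.

Lemma shifted_poly_bound (D : nat -> R -> R) (g p n : nat) (rho X : R) :
  0 <= rho -> (forall j, (j < g)%nat -> Rabs (coef D 1 j) * rho ^ j <= X) ->
  (p + n <= g)%nat ->
  Rabs (poly (coef D (S p)) n rho) * rho ^ p <= INR n * (INR (fact g) * X).
Proof.
  intros Hr HX Hpn.
  assert (0 <= rho ^ p) by (apply pow_le; lra).
  eapply Rle_trans; [apply Rmult_le_compat_r; [lra | apply poly_abs]|].
  rewrite Rmult_comm, <- sumN_scal; apply sumN_const_bound; intros i Hi.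
  rewrite (Rabs_pos_eq rho), <- Rmult_assoc, (Rmult_comm (rho ^ p)), Rmult_assoc, <- pow_add
    by lra.
  apply shifted_coef_bound; auto; lia.
Qed.

(* Bound on D m at rho, measured against rho^(1-m), through Taylor's formula
   for D m of the order complementary to m. *)
Lemma chain_derivative_bound (D : nat -> R -> R) (delta Bp : R) (g m : nat) (rho X : R) :
  0 <= Bp -> deriv_chain D delta Bp (S g) -> 0 < rho < delta -> rho <= 1 -> 0 <= X ->
  (forall j, (j < g)%nat -> Rabs (coef D 1 j) * rho ^ j <= X) ->
  (1 <= m <= S g)%nat ->
  Rabs (D m rho) * rho ^ (m - 1) <= INR (S g) * INR (fact g) * X + Bp * rho ^ g.
Proof.
  intros HB HD Hr Hr1 HX0 HX Hm.
  destruct m as [|p]; [lia|]; replace (S p - 1)%nat with p by lia.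
  set (n := (g - p)%nat).
  assert (Hrem := taylor D delta Bp (S g) HB HD n (S p) ltac:(unfold n; lia) rho Hr).
  assert (Hpoly := shifted_poly_bound D g p n rho X ltac:(lra) HX ltac:(unfold n; lia)).
  assert (0 <= rho ^ p) by (apply pow_le; lra).
  assert (Hrem' : Rabs (D (S p) rho - poly (coef D (S p)) n rho) * rho ^ p <= Bp * rho ^ g).
  { replace g with (n + p)%nat by (unfold n; lia); rewrite pow_add.
    assert (0 <= Bp * rho ^ n) by (apply Rmult_le_pos; [lra | apply pow_le; lra]).
    assert (Bp * rho ^ n / INR (fact n) <= Bp * rho ^ n)
      by (pose proof (inv_fact_le_one n); unfold Rdiv; nra).
    nra. }
  assert (INR n * (INR (fact g) * X) <= INR (S g) * INR (fact g) * X).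
  { rewrite <- Rmult_assoc; apply Rmult_le_compat_r; auto.
    apply Rmult_le_compat_r; [left; apply INR_fact_lt_0 | apply le_INR; unfold n; lia]. }
  replace (D (S p) rho)
    with ((D (S p) rho - poly (coef D (S p)) n rho) + poly (coef D (S p)) n rho) by ring.
  assert (Rabs (D (S p) rho - poly (coef D (S p)) n rho + poly (coef D (S p)) n rho) * rho ^ p
          <= (Rabs (D (S p) rho - poly (coef D (S p)) n rho)
              + Rabs (poly (coef D (S p)) n rho)) * rho ^ p)
    by (apply Rmult_le_compat_r; [lra | apply Rabs_triang]).
  lra.
Qed.

(** * Estimates for a complex function F = Dr 0 + i Di 0 *)

(* The threshold on delta, the constant of the lower bound, and the constant
   of the derivative bounds, depending on gamma = g, C0 of (F2) and the
   bound Bp of the (g+1)-st derivative. *)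
Definition delta0 (g : nat) (C0 Bp : R) : R :=
  Rmin 1 (C0 / (4 * Kpoly g * (Bp / INR (fact g) + 1))).
Definition Clow (g : nat) (C0 : R) : R := C0 / (4 * Kpoly g).
Definition Cder (g : nat) (C0 Bp : R) : R :=
  2 * (INR (S g) * INR (fact g) * (2 * Kpoly g) + Bp / Clow g C0).

Section ComplexEstimates.

Variables (g : nat) (C0 Bp delta : R) (Dr Di : nat -> R -> R).
Hypotheses (Hg : (1 <= g)%nat) (HC0 : 0 < C0) (HBp : 0 <= Bp)
  (Hdelta : 0 < delta <= delta0 g C0 Bp)
  (Hre : deriv_chain Dr delta Bp (S g)) (Him : deriv_chain Di delta Bp (S g)).
Hypothesis Hnondeg : C0 <= sumN (fun i => Rabs (coef Dr 1 i) + Rabs (coef Di 1 i)) g.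
Hypothesis Hmono : forall r1 r2, 0 < r1 -> r1 <= r2 -> r2 < delta ->
  cmod (Dr 1%nat r1) (Di 1%nat r1) <= cmod (Dr 1%nat r2) (Di 1%nat r2).

Variables (rho : R).
Hypothesis Hrho : 0 < rho < delta.

Let A : R := cmod (Dr 1%nat rho) (Di 1%nat rho).
Lemma K_ge1 : 1 <= Kpoly g.
Proof. apply Kpoly_ge1; exact Hg. Qed.

Lemma rho_le1 : rho <= 1.
Proof.
  pose proof (Rmin_l 1 (C0 / (4 * Kpoly g * (Bp / INR (fact g) + 1)))).
  unfold delta0 in Hdelta; lra.
Qed.

(* The choice of delta0 makes the Taylor remainder of F' negligible
   against the lower bound Clow rho^(g-1). *)
Lemma remainder_small : Bp / INR (fact g) * rho ^ g <= Clow g C0 * rho ^ (g - 1).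
Proof.
  pose proof K_ge1 as HK.
  set (E := Bp / INR (fact g)).
  assert (HE : 0 <= E) by (apply Rmult_le_pos; [lra | left; apply Rinv_0_lt_compat, INR_fact_lt_0]).
  assert (Hd : delta <= C0 / (4 * Kpoly g * (E + 1)))
    by (eapply Rle_trans; [apply Hdelta | apply Rmin_r]).
  assert (HEr : E * rho <= Clow g C0).
  { assert ((E + 1) * rho <= (E + 1) * (C0 / (4 * Kpoly g * (E + 1))))
      by (apply Rmult_le_compat_l; lra).
    replace ((E + 1) * (C0 / (4 * Kpoly g * (E + 1)))) with (Clow g C0) in H
      by (unfold Clow; field; lra).
    nra. }
  assert (Hpg : rho ^ g = rho * rho ^ (g - 1))
    by (destruct g as [|g']; [lia | simpl; rewrite Nat.sub_0_r; reflexivity]).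
  rewrite Hpg.
  assert (0 < rho ^ (g - 1)) by (apply pow_lt; lra); nra.
Qed.

(* By monotonicity, |Dr 1| and |Di 1| are bounded by A = |F'(rho)| on (0, rho]. *)
Lemma part_coef_bound (D : nat -> R -> R) :
  deriv_chain D delta Bp (S g) ->
  (forall s, 0 < s <= rho -> Rabs (D 1%nat s) <= cmod (Dr 1%nat s) (Di 1%nat s)) ->
  sumN (fun i => Rabs (coef D 1 i) * rho ^ i) g <= Kpoly g * (A + Bp / INR (fact g) * rho ^ g).
Proof.
  intros HD Hpart; apply (chain_coef_bound D delta); auto.
  intros s Hs; eapply Rle_trans; [apply Hpart; auto|].
  destruct (Req_dec s rho) as [->|Hne]; [unfold A; lra | apply Hmono; lra].
Qed.

Lemma re_coef_bound :
  sumN (fun i => Rabs (coef Dr 1 i) * rho ^ i) g <= Kpoly g * (A + Bp / INR (fact g) * rho ^ g).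
Proof. apply part_coef_bound; auto; intros; apply cmod_re. Qed.

Lemma im_coef_bound :
  sumN (fun i => Rabs (coef Di 1 i) * rho ^ i) g <= Kpoly g * (A + Bp / INR (fact g) * rho ^ g).
Proof. apply part_coef_bound; auto; intros; apply cmod_im. Qed.

(* First conclusion: |F'(rho)| >= Clow rho^(g-1).  The coefficients of F'
   weighted by rho^i sum to at least C0 rho^(g-1) and at most 2K(A + remainder). *)
Lemma derivative_lower_bound : Clow g C0 * rho ^ (g - 1) <= A.
Proof.
  pose proof K_ge1; pose proof rho_le1; pose proof remainder_small.
  pose proof re_coef_bound; pose proof im_coef_bound.
  set (P := rho ^ (g - 1)) in *.
  assert (0 < P) by (apply pow_lt; lra).
  assert (P * C0 <= sumN (fun i => Rabs (coef Dr 1 i) * rho ^ i) g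
                    + sumN (fun i => Rabs (coef Di 1 i) * rho ^ i) g).
  { rewrite <- sumN_plus.
    eapply Rle_trans; [apply Rmult_le_compat_l; [lra | apply Hnondeg]|].
    rewrite <- sumN_scal; apply sumN_le; intros i Hi.
    assert (P <= rho ^ i) by (unfold P; apply pow_decr; [lra | lia]).
    pose proof (Rabs_pos (coef Dr 1 i)); pose proof (Rabs_pos (coef Di 1 i)); nra. }
  assert (Clow g C0 * (4 * Kpoly g) = C0) by (unfold Clow; field; lra).
  nra.
Qed.

Lemma weighted_coef_bound (D : nat -> R -> R) :
  sumN (fun i => Rabs (coef D 1 i) * rho ^ i) g <= Kpoly g * (A + Bp / INR (fact g) * rho ^ g) ->
  forall j, (j < g)%nat -> Rabs (coef D 1 j) * rho ^ j <= 2 * Kpoly g * A.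
Proof.
  intros Hsum j Hj; pose proof K_ge1; pose proof remainder_small; pose proof derivative_lower_bound.
  assert (Rabs (coef D 1 j) * rho ^ j <= sumN (fun i => Rabs (coef D 1 i) * rho ^ i) g).
  { apply (sumN_term (fun i => Rabs (coef D 1 i) * rho ^ i)); auto; intros i _.
    apply Rmult_le_pos; [apply Rabs_pos | apply pow_le; lra]. }
  assert (Kpoly g * (A + Bp / INR (fact g) * rho ^ g) <= Kpoly g * (A + A))
    by (apply Rmult_le_compat_l; lra).
  lra.
Qed.

Lemma derivative_upper_bound (m : nat) : (1 <= m <= S g)%nat ->
  cmod (Dr m rho) (Di m rho) * rho ^ (m - 1) <= Cder g C0 Bp * A.
Proof.
  intros Hm; pose proof K_ge1; pose proof rho_le1.
  assert (HA : 0 <= A) by apply cmod_nonneg.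
  assert (HX : 0 <= 2 * Kpoly g * A) by nra.
  pose proof (chain_derivative_bound Dr delta Bp g m rho _ HBp Hre Hrho rho_le1 HX
                (weighted_coef_bound Dr re_coef_bound) Hm) as Br.
  pose proof (chain_derivative_bound Di delta Bp g m rho _ HBp Him Hrho rho_le1 HX
                (weighted_coef_bound Di im_coef_bound) Hm) as Bi.
  assert (HClow : 0 < Clow g C0) by (unfold Clow; apply Rdiv_lt_0_compat; lra).
  assert (Bp * rho ^ g <= Bp / Clow g C0 * A).
  { pose proof derivative_lower_bound.
    assert (rho ^ g <= rho ^ (g - 1)) by (apply pow_decr; [lra | lia]).
    assert (Clow g C0 * rho ^ g <= A) by nra.
    apply (Rmult_le_reg_l (Clow g C0)); auto.
    replace (Clow g C0 * (Bp / Clow g C0 * A)) with (Bp * A) by (field; lra).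
    replace (Clow g C0 * (Bp * rho ^ g)) with (Bp * (Clow g C0 * rho ^ g)) by ring.
    apply Rmult_le_compat_l; lra. }
  assert (0 <= rho ^ (m - 1)) by (apply pow_le; lra).
  pose proof (cmod_le_sum (Dr m rho) (Di m rho)).
  unfold Cder; nra.
Qed.

End ComplexEstimates.

Lemma Cn_deriv_chain (N : nat) (delta Bp : R) (D : nat -> R -> R) :
  Cn_on_0d N delta D -> (forall x, 0 < x < delta -> Rabs (D N x) <= Bp) ->
  deriv_chain D delta Bp N.
Proof.
  intros [HC _] Hb; split; auto.
  intros k Hk; destruct (HC k Hk) as [Hd Hr]; split; auto.
  eapply rderiv_right_cont0; eauto.
Qed.

Lemma sum_f_shift_le (f w : nat -> R) (k : nat) :
  (forall i, f (S i) <= w i) -> (forall i, 0 <= w i) ->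
  sum_f_R0 (fun x => f (x + 2)%nat) k <= sumN w (S (S k)).
Proof.
  intros Hf Hw; induction k as [|k IH].
  - simpl; specialize (Hf 1%nat); specialize (Hw 0%nat); simpl in Hf; lra.
  - simpl sum_f_R0; change (sumN w (S (S (S k)))) with (sumN w (S (S k)) + w (S (S k))).
    replace (S (k + 2)) with (S (S (S k))) by lia; specialize (Hf (S (S k))); lra.
Qed.

(* (F2) in terms of the Taylor coefficients of the real and imaginary parts
   of F': |a_(i+1)| <= |coef Dr 1 i| + |coef Di 1 i| since (i+1)! >= i!. *)
Lemma nondeg_coef_sum (g : nat) (Dr Di : nat -> R -> R) : (2 <= g)%nat ->
  sum_f 2 g (fun j => cmod (Dr j 0) (Di j 0) / INR (fact j))
    <= sumN (fun i => Rabs (coef Dr 1 i) + Rabs (coef Di 1 i)) g.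
Proof.
  intros Hg; unfold sum_f.
  replace g with (S (S (g - 2))) at 2 by lia.
  apply (sum_f_shift_le (fun j => cmod (Dr j 0) (Di j 0) / INR (fact j))).
  - intros i; unfold coef; simpl (1 + i)%nat.
    assert (Hf : 0 < INR (fact i)) by apply INR_fact_lt_0.
    assert (INR (fact i) <= INR (fact (S i))) by (apply le_INR, Factorial.fact_le; lia).
    assert (/ INR (fact (S i)) <= / INR (fact i)) by (apply Rinv_le_contravar; lra).
    assert (0 < / INR (fact (S i))) by (apply Rinv_0_lt_compat; lra).
    unfold Rdiv; rewrite !Rabs_mult, (Rabs_pos_eq (/ INR (fact i))) by lra.
    pose proof (cmod_le_sum (Dr (S i) 0) (Di (S i) 0)).
    pose proof (cmod_nonneg (Dr (S i) 0) (Di (S i) 0)).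
    pose proof (Rabs_pos (Dr (S i) 0)); pose proof (Rabs_pos (Di (S i) 0)); nra.
  - intros i; pose proof (Rabs_pos (coef Dr 1 i)); pose proof (Rabs_pos (coef Di 1 i)); lra.
Qed.

Lemma delta0_pos (g : nat) (C0 Bp : R) :
  (1 <= g)%nat -> 0 < C0 -> 0 <= Bp -> 0 < delta0 g C0 Bp.
Proof.
  intros Hg HC0 HBp; pose proof (Kpoly_ge1 g Hg).
  assert (0 <= Bp / INR (fact g))
    by (apply Rmult_le_pos; [lra | left; apply Rinv_0_lt_compat, INR_fact_lt_0]).
  apply Rmin_pos; [lra|]; apply Rdiv_lt_0_compat; [lra|]; apply Rmult_lt_0_compat; lra.
Qed.

Lemma Clow_pos (g : nat) (C0 : R) : (1 <= g)%nat -> 0 < C0 -> 0 < Clow g C0.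
Proof. intros Hg HC0; pose proof (Kpoly_ge1 g Hg); apply Rdiv_lt_0_compat; lra. Qed.

Lemma Cder_pos (g : nat) (C0 Bp : R) : (1 <= g)%nat -> 0 < C0 -> 0 <= Bp -> 0 < Cder g C0 Bp.
Proof.
  intros Hg HC0 HBp; pose proof (Kpoly_ge1 g Hg); pose proof (Clow_pos g C0 Hg HC0).
  assert (0 < INR (S g)) by (apply lt_0_INR; lia).
  pose proof (INR_fact_lt_0 g).
  assert (0 <= Bp / Clow g C0) by (apply Rmult_le_pos; [lra | left; apply Rinv_0_lt_compat; lra]).
  unfold Cder; assert (0 < INR (S g) * INR (fact g)) by nra; nra.
Qed.

(* Rewrites x rho^(m-1) <= c A into the form x <= c rho^(1-m) A of the theorem. *)
Lemma le_mul_inv (x c a r : R) : 0 < r -> x * r <= c * a -> x <= c * / r * a.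
Proof.
  intros Hr H; apply (Rmult_le_reg_r r); auto.
  replace (c * / r * a * r) with (c * a) by (field; lra); exact H.
Qed.

Theorem mainTheorem2 :
  forall (gamma : nat), (2 <= gamma)%nat ->
  forall (C0 : R), 0 < C0 ->
  forall (B : nat -> R),
  exists delta0 : R, 0 < delta0 /\
  forall (delta : R), 0 < delta <= delta0 ->
  forall (M : Type) (Fre Fim : nat -> M -> R -> R),
    (forall mu : M, Cn_on_0d (S gamma) delta (fun k => Fre k mu) /\
                    Cn_on_0d (S gamma) delta (fun k => Fim k mu)) ->
    (forall mu : M, Fre 0%nat mu 0 = 0 /\ Fim 0%nat mu 0 = 0 /\
                    Fre 1%nat mu 0 = 0 /\ Fim 1%nat mu 0 = 0) ->
    (forall mu : M,
        sum_f 2 gamma (fun j => cmod (Fre j mu 0) (Fim j mu 0) / INR (Factorial.fact j)) >= C0) ->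
    (forall (mu : M) (r1 r2 : R), 0 < r1 -> r1 <= r2 -> r2 < delta ->
        cmod (Fre 1%nat mu r1) (Fim 1%nat mu r1) <= cmod (Fre 1%nat mu r2) (Fim 1%nat mu r2)) ->
    (forall (k : nat) (mu : M) (rho : R), (k <= S gamma)%nat -> 0 < rho < delta ->
        cmod (Fre k mu rho) (Fim k mu rho) <= B k) ->
    exists C : R, 0 < C /\
    exists Cm : nat -> R, (forall m : nat, 0 < Cm m) /\
    forall (rho : R) (mu : M), 0 < rho < delta ->
      cmod (Fre 1%nat mu rho) (Fim 1%nat mu rho) >= C * rho ^ (gamma - 1) /\
      forall m : nat, (1 <= m <= S gamma)%nat ->
        cmod (Fre m mu rho) (Fim m mu rho) <=
          Cm m * / (rho ^ (m - 1)) * cmod (Fre 1%nat mu rho) (Fim 1%nat mu rho).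
Proof.
  intros g Hg C0 HC0 B.
  set (Bp := Rabs (B (S g))).
  assert (HBp : 0 <= Bp) by apply Rabs_pos.
  assert (Hg1 : (1 <= g)%nat) by lia.
  exists (delta0 g C0 Bp); split; [apply delta0_pos; auto|].
  intros delta Hd M Fre Fim HCn _ HF2 HF3 HF4.
  exists (Clow g C0); split; [apply Clow_pos; auto|].
  exists (fun _ => Cder g C0 Bp); split; [intros; apply Cder_pos; auto|].
  intros rho mu Hr; destruct (HCn mu) as [HCre HCim].
  assert (Htop : forall x, 0 < x < delta -> cmod (Fre (S g) mu x) (Fim (S g) mu x) <= Bp)
    by (intros x Hx; eapply Rle_trans; [apply HF4; auto | apply Rle_abs]).
  assert (Hre : deriv_chain (fun k => Fre k mu) delta Bp (S g))
    by (apply Cn_deriv_chain; auto; intros x Hx; eapply Rle_trans; [apply cmod_re | auto]).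
  assert (Him : deriv_chain (fun k => Fim k mu) delta Bp (S g))
    by (apply Cn_deriv_chain; auto; intros x Hx; eapply Rle_trans; [apply cmod_im | auto]).
  assert (Hnondeg := Rle_trans _ _ _ (Rge_le _ _ (HF2 mu))
                       (nondeg_coef_sum g (fun k => Fre k mu) (fun k => Fim k mu) Hg)).
  split.
  - apply Rle_ge.
    apply (derivative_lower_bound g C0 Bp delta (fun k => Fre k mu) (fun k => Fim k mu)); auto.
  - intros m Hm; apply le_mul_inv; [apply pow_lt; lra|].
    apply (derivative_upper_bound g C0 Bp delta (fun k => Fre k mu) (fun k => Fim k mu)); auto.
Qed.
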